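(* In the online tolling setting described in the context, let $\bm{\pi}$ be the algorithm that sets $\boldsymbol{\tau}^{(1)}=\bm{0}$ and, after observing the equilibrium edge flows $\bm{x}^t$ under $\boldsymbol{\tau}^{(t)}$, updates $\boldsymbol{\tau}^{(t+1)}=(\boldsymbol{\tau}^{(t)}-\gamma(\bm{c}-\bm{x}^t))_+$ (componentwise positive part) with step size $\gamma>0$. Then $$R_T(\bm{\pi})\le\gamma T\,\frac{|E|\,(\max_{e\in E}c_e+|\mathcal{U}|)^2}{2}.$$
   Context: Network: directed graph $G=(V,E)$, edge capacities $\bm{c}=\{c_e\}$ with $c_e\ge0$, fixed edge travel times $l_e$, $l_P=\sum_{e\in P}l_e$. Finite user set $\mathcal{U}$; user $u$ has fixed outside-option cost $\lambda_u$. In each period $t=1,\dots,T$, O-D pairs $w^t_u$ and values of time $v^t_u\ge0$ are drawn i.i.d. across periods from a distribution $\mathcal{D}$; $\mathcal{P}^t_u$ is the finite set of paths for $w^t_u$. Given tolls $\boldsymbol{\tau}^{(t)}$, the period-$t$ equilibrium assigns each user to a path $P\in\mathcal{P}^t_u$ or the outside option so as to minimize cost ($v^t_ul_P+\sum_{e\in P}\tau^{(t)}_e$ for a path, $\lambda_u$ for the outside option; capacities need not be respected), encoded by binary $f^t_{P,u},f^t_{o,u}$, with edge flows $x^t_e=\sum_u\sum_{P\in\mathcal{P}^t_u:e\in P}f^t_{P,u}$. Let $U_t=\sum_u(v^t_u\sum_Pl_Pf^t_{P,u}+\lambda_uf^t_{o,u})$ and $U^*_t$ be the minimum of this objective over binary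 assignments (each user exactly one path or the outside option) satisfying $\sum_u\sum_{P\ni e}f_{P,u}\le c_e$ for all $e$. Regret: $R_T(\bm{\pi})=\mathbb{E}[\sum_{t=1}^T(U_t-U^*_t)]$, expectation over $\mathcal{D}$. *)

From HB Require Import structures.
From mathcomp Require Import all_boot all_order all_algebra.
From mathcomp Require Import all_classical all_reals all_analysis.
Set Implicit Arguments. Unset Strict Implicit. Unset Printing Implicit Defensive.
Import Order.TTheory GRing.Theory Num.Theory.
Local Open Scope classical_set_scope.
Local Open Scope ring_scope.

Section Tolling.
Variables (R : realType) (V E U : finType).

Fixpoint walk (src dst : E -> V) (o d : V) (p : seq E) : bool :=
  if p is e :: p' then (src e == o) && walk src dst (dst e) d p' else o == d.

Definition od_path (src dst : E -> V) (o d : V) (p : seq E) : bool :=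
  walk src dst o d p && uniq p.

(* An assignment: each user takes a path (Some p) or the outside option (None). *)
Definition assignment := U -> option (seq E).

Definition path_len (l : E -> R) (p : seq E) : R := \sum_(e <- p) l e.

Definition valid (paths : U -> seq (seq E)) (a : assignment) : Prop :=
  forall u p, a u = Some p -> p \in paths u.

Definition flow (a : assignment) (e : E) : R :=
  \sum_(u : U) (if a u is Some p then (e \in p)%:R else 0).

Definition user_cost (l : E -> R) (lam : U -> R) (vt : U -> R) (tau : E -> R)
  (u : U) (o : option (seq E)) : R :=
  if o is Some p then vt u * path_len l p + \sum_(e <- p) tau e else lam u.

Definition is_equilibrium (l : E -> R) (lam : U -> R) (paths : U -> seq (seq E))
  (vt : U -> R) (tau : E -> R) (a : assignment) : Prop :=
  valid paths a /\
  forall u o, (forall p, o = Some p -> p \in paths u) ->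
    user_cost l lam vt tau u (a u) <= user_cost l lam vt tau u o.

Definition social_cost (l : E -> R) (lam : U -> R) (vt : U -> R) (a : assignment) : R :=
  \sum_(u : U) (if a u is Some p then vt u * path_len l p else lam u).

Definition feasible (c : E -> R) (paths : U -> seq (seq E)) (a : assignment) : Prop :=
  valid paths a /\ forall e, flow a e <= c e.

Definition opt_cost (l : E -> R) (lam : U -> R) (c : E -> R)
  (paths : U -> seq (seq E)) (vt : U -> R) : R :=
  inf [set social_cost l lam vt a | a in feasible c paths].

(* The toll sequence of the algorithm: tau(0) = 0 is the toll of period 1;
   x^t is the flow of the equilibrium assignment realised in period t,
   selected by [sel t] (arbitrary tie-breaking) for tolls tau(t). *)
Fixpoint tolls (gamma : R) (c : E -> R)
  (sel : nat -> (E -> R) -> assignment) (t : nat) : E -> R :=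
  if t is t'.+1 then
    let tau := tolls gamma c sel t' in
    fun e => Num.max 0 (tau e - gamma * (c e - flow (sel t' tau) e))
  else fun _ => 0.

End Tolling.

Definition iid_law {R : realType} {d1 d2 : measure_display}
  {Om : measurableType d1} {S : measurableType d2}
  (P : probability Om R) (D : probability S R) (T : nat) (xi : nat -> Om -> S) : Prop :=
  (forall t, measurable_fun setT (xi t)) /\
  forall A : 'I_T -> set S, (forall i, measurable (A i)) ->
    fine (P (\bigcap_(i in [set: 'I_T]) (xi i @^-1` A i))) = \prod_(i < T) fine (D (A i)).

(* For fixed tolls tau >= 0 the equilibrium minimises every user's tolled cost;
   summing over users and comparing with any capacity-feasible assignment,
   whose toll revenue is at most sum_e tau_e c_e, gives the weak-duality bound
   U_t - U*_t <= sum_e tau_e (c_e - x_e).  The toll update is projected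
   gradient descent on the nonnegative orthant with gradient g = c - x, and
   |g|^2 <= K := |E| (max_e c_e + |U|)^2.  Expanding |tau_(t+1)|^2 <=
   |tau_t - gamma g_t|^2 and telescoping the potential |tau_t|^2 gives
   sum_t <tau_t, g_t> <= gamma T K / 2.  The bound holds on every sample path. *)
From HB Require Import structures.
From mathcomp Require Import all_boot all_order all_algebra.
From mathcomp Require Import all_classical all_reals all_analysis.
From mathcomp Require Import measurable_realfun lra.
Set Implicit Arguments. Unset Strict Implicit. Unset Printing Implicit Defensive.
Import Order.TTheory GRing.Theory Num.Theory.
Import HBNNSimple.
Local Open Scope classical_set_scope.
Local Open Scope ring_scope.

(* No measurability of [f] is required: the integral of the positive part is a
   supremum of integrals of simple functions, each bounded by [C]. *)
Lemma integral_le_const d (T : measurableType d) (R : realType)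
    (P : probability T R) (f : T -> R) (C : R) :
  0 <= C -> (forall x, f x <= C) -> (\int[P]_x (f x)%:E <= C%:E)%E.
Proof.
move=> C0 fC; rewrite integralE.
apply: (@le_trans _ _ (\int[P]_x ((fun x => (f x)%:E)^\+ x))%E).
  rewrite -[leRHS]sube0; apply: leeB => //.
  by apply: integral_ge0 => x _; exact: funeneg_ge0.
rewrite ge0_integralE; last by move=> x _; exact: funepos_ge0.
apply: ge_ereal_sup => _ [h hle <-].
have -> : (sintegral P h = \int[P]_x (h x)%:E)%E.
  rewrite (integral_nnsfun P measurableT h); congr sintegral.
  by apply/funext => x; rewrite /patch /= in_setT.
apply: (@le_trans _ _ (\int[P]_x (cst C%:E) x)%E).
  apply: ge0_le_integral => //.
  - by move=> x _; rewrite lee_fin.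
  - by apply/measurable_EFinP; exact: measurable_funP.
  - move=> x _; have := hle x; rewrite patch_setT => /le_trans; apply.
    by rewrite funeposE ge_max !lee_fin C0 fC.
rewrite integral_cst // -[leRHS]mule1.
by apply: lee_wpmul2l; [rewrite lee_fin | exact: probability_le1].
Qed.

Lemma sqrB_le_sqrD (R : realDomainType) (x y a b : R) :
  0 <= x <= a -> 0 <= y <= b -> (x - y) ^+ 2 <= (a + b) ^+ 2.
Proof. by move=> /andP[x0 xa] /andP[y0 yb]; nra. Qed.

Section TollRevenue.
Variables (R : realType) (E U : finType).
Implicit Types (tau c l : E -> R) (a : assignment E U).

Lemma sum_uniq_indicator tau (p : seq E) :
  uniq p -> \sum_(e <- p) tau e = \sum_e (e \in p)%:R * tau e.
Proof.
move=> up; rewrite big_uniq //= big_mkcond /=; apply: eq_bigr => e _.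
by case: ifP => _; rewrite ?mul1r ?mul0r.
Qed.

Lemma flow_ge0 a e : 0 <= flow R a e.
Proof. by apply: sumr_ge0 => u _; case: (a u). Qed.

Lemma flow_le_card a e : flow R a e <= #|U|%:R.
Proof.
rewrite -sum1_card natr_sum; apply: ler_sum => u _.
by case: (a u) => // p; case: (e \in p).
Qed.

Lemma sum_user_cost l lam vt tau paths a :
  (forall u p, p \in paths u -> uniq p) -> valid paths a ->
  \sum_u user_cost l lam vt tau u (a u) =
  social_cost l lam vt a + \sum_e tau e * flow R a e.
Proof.
move=> paths_uniq va.
have -> : \sum_e tau e * flow R a e =
    \sum_u (if a u is Some p then \sum_e (e \in p)%:R * tau e else 0).
  under eq_bigr => e _ do rewrite mulr_sumr.
  rewrite exchange_big /=; apply: eq_bigr => u _.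
  case: (a u) => [p|]; last by rewrite big1 // => e _; rewrite mulr0.
  by apply: eq_bigr => e _; rewrite mulrC.
rewrite /social_cost -big_split /=; apply: eq_bigr => u _.
have := va u; case: (a u) => [p|] hp /=; last by rewrite addr0.
by rewrite sum_uniq_indicator // (paths_uniq u p) // hp.
Qed.

Lemma equilibrium_regret_le_toll_slack l c lam paths vt tau a :
  (forall e, 0 <= c e) -> (forall e, 0 <= tau e) ->
  (forall u p, p \in paths u -> uniq p) ->
  is_equilibrium l lam paths vt tau a ->
  social_cost l lam vt a - opt_cost l lam c paths vt <=
  \sum_e tau e * (c e - flow R a e).
Proof.
move=> c0 tau0 paths_uniq [va a_opt].
suff : social_cost l lam vt a - \sum_e tau e * (c e - flow R a e)
       <= opt_cost l lam c paths vt by lra.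
apply: lb_le_inf.
  exists (social_cost l lam vt (fun _ => None)), (fun _ => None) => //.
  by split => // e; rewrite /flow big1.
move=> _ [b [vb b_cap] <-].
have cost_a := @sum_user_cost l lam vt tau paths a paths_uniq va.
have cost_b := @sum_user_cost l lam vt tau paths b paths_uniq vb.
have a_le_b : \sum_u user_cost l lam vt tau u (a u)
              <= \sum_u user_cost l lam vt tau u (b u).
  by apply: ler_sum => u _; apply: a_opt => p; exact: vb.
have revenue_b : \sum_e tau e * flow R b e <= \sum_e tau e * c e.
  by apply: ler_sum => e _; apply: ler_wpM2l.
have -> : \sum_e tau e * (c e - flow R a e)
          = \sum_e tau e * c e - \sum_e tau e * flow R a e.
  by rewrite -sumrB; apply: eq_bigr => e _; rewrite mulrBr.
lra.
Qed.

End TollRevenue.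

Section ProjectedDescent.
Variables (R : realFieldType) (E : finType) (gamma K : R) (g tau : nat -> E -> R).
Hypotheses (gamma_gt0 : 0 < gamma) (tau0 : forall e, tau 0%N e = 0)
  (tauS : forall t e, tau t.+1 e = Num.max 0 (tau t e - gamma * g t e))
  (g_bounded : forall t, \sum_e g t e ^+ 2 <= K).

Lemma descent_step t e :
  2 * gamma * (tau t e * g t e) + tau t.+1 e ^+ 2
  <= tau t e ^+ 2 + gamma ^+ 2 * g t e ^+ 2.
Proof.
have proj_sq : tau t.+1 e ^+ 2 <= (tau t e - gamma * g t e) ^+ 2.
  rewrite tauS; case: (lerP 0 (tau t e - gamma * g t e)) => // _.
  by rewrite expr0n sqr_ge0.
nra.
Qed.

Lemma descent_potential n :
  2 * gamma * (\sum_(t < n) \sum_e tau t e * g t e) + \sum_e tau n e ^+ 2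
  <= gamma ^+ 2 * n%:R * K.
Proof.
elim: n => [|n IH].
  by rewrite big_ord0 mulr0 add0r mulr0 mul0r big1 // => e _; rewrite tau0 expr0n.
have step : 2 * gamma * (\sum_e tau n e * g n e) + \sum_e tau n.+1 e ^+ 2
            <= \sum_e tau n e ^+ 2 + gamma ^+ 2 * K.
  apply: (@le_trans _ _ (\sum_e tau n e ^+ 2 + gamma ^+ 2 * \sum_e g n e ^+ 2)).
    rewrite !mulr_sumr -!big_split /=; apply: ler_sum => e _; exact: descent_step.
  by rewrite lerD2l ler_wpM2l ?sqr_ge0.
rewrite big_ord_recr /= mulrDr -natr1; nra.
Qed.

Lemma descent_regret n :
  \sum_(t < n) \sum_e tau t e * g t e <= gamma * n%:R * K / 2.
Proof.
have potential := descent_potential n.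
have potential_ge0 : 0 <= \sum_e tau n e ^+ 2 by apply: sumr_ge0 => e _; exact: sqr_ge0.
rewrite ler_pdivlMr // -(ler_pM2l gamma_gt0); nra.
Qed.

End ProjectedDescent.

Theorem lemma2 (R : realType) (V E U : finType) (src dst : E -> V)
  (c l : E -> R) (lam : U -> R) (Pw : V * V -> seq (seq E))
  (d1 d2 : measure_display) (S : measurableType d2) (D : probability S R)
  (w : S -> U -> V * V) (v : S -> U -> R)
  (Om : measurableType d1) (P : probability Om R) (xi : nat -> Om -> S)
  (sel : nat -> Om -> (E -> R) -> assignment E U) (gamma : R) (T : nat) :
  (forall e, 0 <= c e) ->
  (forall o d p, p \in Pw (o, d) -> od_path src dst o d p) ->
  (forall s u, 0 <= v s u) ->
  iid_law P D T xi ->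
  (forall t om tau, is_equilibrium l lam (fun u => Pw (w (xi t om) u))
                      (v (xi t om)) tau (sel t om tau)) ->
  0 < gamma ->
  (\int[P]_om
     (\sum_(t < T)
        (social_cost l lam (v (xi t om))
           (sel t om (tolls gamma c (fun t' => sel t' om) t))
         - opt_cost l lam c (fun u => Pw (w (xi t om) u)) (v (xi t om))))%:E
   <= (gamma * T%:R * (#|E|%:R * (\big[Num.max/0]_(e : E) c e + #|U|%:R) ^+ 2) / 2)%:E)%E.
Proof.
move=> c0 Pw_path _ _ sel_eq gamma_gt0.
set M := \big[Num.max/0]_(e : E) c e; set K := #|E|%:R * (M + #|U|%:R) ^+ 2.
have M0 : 0 <= M.
  by apply: (big_ind (fun x : R => 0 <= x)) => // x y x0 _; rewrite le_max x0.
have K0 : 0 <= K by rewrite mulr_ge0 ?sqr_ge0.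
apply: integral_le_const => [|om].
  by rewrite divr_ge0 // mulr_ge0 // mulr_ge0 // ltW.
pose tau t := tolls gamma c (fun t' => sel t' om) t.
pose g t e := c e - flow R (sel t om (tau t)) e.
have g_bounded t : \sum_e g t e ^+ 2 <= K.
  apply: (@le_trans _ _ (\sum_(e : E) (M + #|U|%:R) ^+ 2)); last first.
    by rewrite sumr_const /K mulr_natl.
  apply: ler_sum => e _.
  by apply: sqrB_le_sqrD; rewrite ?flow_ge0 ?flow_le_card ?c0 ?le_bigmax.
apply: le_trans (descent_regret gamma_gt0 (fun e => erefl) (fun t e => erefl) g_bounded T).
apply: ler_sum => t _; apply: equilibrium_regret_le_toll_slack => //.
- by case: (val t) => [|t'] e //=; rewrite le_max lexx.
- by move=> u p; case: (w (xi t om) u) => o d /Pw_path /andP[].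
Qed.
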